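(* Let $q$ be prime and let $S$ be the $k\times 2n$ generator matrix over $\mathbb{Z}_q$ of a stabilizer code on $n$ qudits with $k$ generators, and let $M\in\mathbb{Z}^{k\times 2n}$ be its invariant form. Then there exist integer vectors $\bar X_1,\dots,\bar X_{n-k},\bar Z_1,\dots,\bar Z_{n-k}\in\mathbb{Z}^{2n}$ such that (i) their reductions mod $q$ form a complete set of logical operators of the code, i.e. they commute mod $q$ with all rows of $S$, are independent of the stabilizers, and satisfy $\bar X_i\odot\bar Z_j\equiv\delta_{ij}$, $\bar X_i\odot\bar X_j\equiv\bar Z_i\odot\bar Z_j\equiv 0 \pmod q$ for all $i,j$; and (ii) each of them has symplectic product exactly $0$ over $\mathbb{Z}$ with every row of $M$. Moreover, constructing them does not change $M$.
   Context: $n$-qudit Paulis over $q$ levels are represented (up to phase) by exponent vectors $(a|b)\in\mathbb{Z}_q^{2n}$; integer lifts are in $\mathbb{Z}^{2n}$. Symplectic product: $u\odot v=\sum_{l=1}^n (v_{z,l}u_{x,l}-v_{x,l}u_{z,l})$, computed mod $q$ or over $\mathbb{Z}$. Two Paulis commute iff their symplectic product is $0 \bmod q$. Logical operators are elements of the normalizer of the stabilizer group not in the stabilizer group. An invariant form of $S$ is an integer matrix $M\equiv S\pmod q$ whose rows have pairwise integer symplectic product $0$ (obtained from the canonical form $(I_k\ X_2|Z_1\ Z_2)$ by adding to $Z_1$ the strictly lower triangular matrix $L$ with $L_{ij}=\phi(s_i)\odot\phi(s_j)$ over $\mathbb{Z}$ for $i>j$). *)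

From HB Require Import structures.
From mathcomp Require Import all_boot all_order all_algebra.
Set Implicit Arguments. Unset Strict Implicit. Unset Printing Implicit Defensive.
Import GRing.Theory Num.Theory.
Local Open Scope ring_scope.

(* A Pauli exponent vector (a|b) on n qudits is a row vector of length n+n:
   the first n entries are the x-part a, the last n the z-part b. *)

Definition symp (R : pzRingType) (n : nat) (u v : 'rV[R]_(n + n)) : R :=
  \sum_(l < n) (v 0 (rshift n l) * u 0 (lshift n l)
                - v 0 (lshift n l) * u 0 (rshift n l)).

Definition redq (q : nat) (m p : nat) (A : 'M[int]_(m, p)) : 'M['F_q]_(m, p) :=
  map_mx (fun z : int => z%:~R) A.

Definition stabilizer_code (q k n : nat) (S : 'M['F_q]_(k, n + n)) : Prop :=
  \rank S = k /\ forall i j : 'I_k, symp (row i S) (row j S) = 0.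

Definition invariant_form (q k n : nat) (S : 'M['F_q]_(k, n + n))
    (M : 'M[int]_(k, n + n)) : Prop :=
  redq q M = S /\ forall i j : 'I_k, symp (row i M) (row j M) = 0.

From HB Require Import structures.
From mathcomp Require Import all_boot all_order all_algebra.
From mathcomp Require Import zify.
Import GRing.Theory Num.Theory.
Set Implicit Arguments. Unset Strict Implicit. Unset Printing Implicit Defensive.
Local Open Scope ring_scope.

(* Over the field F_q the logical operators are built by a symplectic
   Gram-Schmidt process: pick x symplectically orthogonal to the stabilizers
   but outside their span, a partner z with x (.) z = 1, and recurse after
   adjoining x.  To lift them to Z, let B = M J be the integer matrix with
   B y^T = (M (.) y) and P an integer lift of a right inverse of B mod q.
   Then D = B P is 1 mod q, and the integer matrix
   Pi = det(D) I - P adj(D) B  satisfies  B Pi = 0  while reducing to the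
   projector I - P B mod q, which fixes every mod-q solution of B y^T = 0.
   Applying Pi to arbitrary lifts of the logical operators therefore gives
   integer vectors commuting exactly with M and unchanged mod q. *)

Section SymplecticGram.
Variables (R : comPzRingType) (n : nat).

Definition symp_mx : 'M[R]_(n + n) := block_mx 0 1%:M (-1%:M) 0.

Definition symp_gram m p (A : 'M[R]_(m, n + n)) (B : 'M[R]_(p, n + n)) :=
  A *m symp_mx *m B^T.

Local Notation w := symp_gram.

Lemma symp_gramE m p (A : 'M[R]_(m, n + n)) (B : 'M[R]_(p, n + n)) i j :
  w A B i j = symp (row i A) (row j B).
Proof.
rewrite /w /symp /symp_mx.
have -> : A *m block_mx 0 1%:M (-1%:M) 0 = row_mx (- rsubmx A) (lsubmx A).
  by rewrite -{1}[A]hsubmxK mul_row_block !mulmx0 !mulmxN !mulmx1 add0r addr0.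
rewrite -{1}(hsubmxK B) tr_row_mx mul_row_col !mxE addrC -big_split /=.
by apply: eq_bigr => l _; rewrite !mxE mulNr mulrC [A _ _ * _]mulrC.
Qed.

Lemma tr_symp_mx : symp_mx^T = - symp_mx.
Proof.
rewrite /symp_mx tr_block_mx opp_block_mx !trmx0 trmx1 linearN /= trmx1.
by rewrite !oppr0 opprK.
Qed.

Lemma symp_mx_sqr : symp_mx *m symp_mx = - 1%:M.
Proof.
rewrite /symp_mx mulmx_block !mulmx0 !mul0mx !mulmx1 !mul1mx !add0r !addr0.
by rewrite (scalar_mx_block n n) opp_block_mx !oppr0.
Qed.

Lemma symp_gramC m p (A : 'M[R]_(m, n + n)) (B : 'M[R]_(p, n + n)) :
  w B A = - (w A B)^T.
Proof.
by rewrite /w !trmx_mul trmxK tr_symp_mx mulNmx mulmxN opprK mulmxA.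
Qed.

Lemma symp_gram_alt (u : 'rV[R]_(n + n)) : w u u = 0.
Proof.
apply/matrixP => i j; rewrite !ord1 symp_gramE mxE.
by apply: big1 => l _; rewrite mulrC subrr.
Qed.

Lemma symp_gram0l m p (B : 'M[R]_(p, n + n)) : w (0 : 'M_(m, n + n)) B = 0.
Proof. by rewrite /w !mul0mx. Qed.

Lemma symp_gramDl m p (A1 A2 : 'M[R]_(m, n + n)) (B : 'M[R]_(p, n + n)) :
  w (A1 + A2) B = w A1 B + w A2 B.
Proof. by rewrite /w !mulmxDl. Qed.

Lemma symp_gramBl m p (A1 A2 : 'M[R]_(m, n + n)) (B : 'M[R]_(p, n + n)) :
  w (A1 - A2) B = w A1 B - w A2 B.
Proof. by rewrite /w !mulmxBl. Qed.

Lemma symp_gramBr m p (A : 'M[R]_(m, n + n)) (B1 B2 : 'M[R]_(p, n + n)) :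
  w A (B1 - B2) = w A B1 - w A B2.
Proof. by rewrite /w linearB /= mulmxBr. Qed.

Lemma symp_gramMl m m' p (D : 'M[R]_(m', m)) (A : 'M[R]_(m, n + n))
    (B : 'M[R]_(p, n + n)) :
  w (D *m A) B = D *m w A B.
Proof. by rewrite /w !mulmxA. Qed.

Lemma symp_gramMr m p p' (A : 'M[R]_(m, n + n)) (D : 'M[R]_(p', p))
    (B : 'M[R]_(p, n + n)) :
  w A (D *m B) = w A B *m D^T.
Proof. by rewrite /w trmx_mul !mulmxA. Qed.

Lemma symp_gram_coll m1 m2 p (A1 : 'M[R]_(m1, n + n)) (A2 : 'M[R]_(m2, n + n))
    (B : 'M[R]_(p, n + n)) :
  w (col_mx A1 A2) B = col_mx (w A1 B) (w A2 B).
Proof. by rewrite /w !mul_col_mx. Qed.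

Lemma symp_gram_colr m p1 p2 (A : 'M[R]_(m, n + n)) (B1 : 'M[R]_(p1, n + n))
    (B2 : 'M[R]_(p2, n + n)) :
  w A (col_mx B1 B2) = row_mx (w A B1) (w A B2).
Proof. by rewrite /w tr_col_mx mul_mx_row. Qed.

End SymplecticGram.

Lemma map_symp_mx (R R' : comPzRingType) (f : {rmorphism R -> R'}) n :
  map_mx f (symp_mx R n) = symp_mx R' n.
Proof. by rewrite /symp_mx map_block_mx !map_mx0 map_mxN map_mx1. Qed.

Section SymplecticFrames.
Variables (F : fieldType) (n : nat).
Local Notation w := (@symp_gram F n).

Definition hyperbolic_pairs k m (S : 'M[F]_(k, n + n)) (X Z : 'M[F]_(m, n + n)) :=
  [/\ w S X = 0, w S Z = 0, w X Z = 1%:M, w X X = 0 & w Z Z = 0].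

Lemma symp_mx_free : row_free (symp_mx F n).
Proof. by apply/row_freeP; exists (- symp_mx F n); rewrite mulmxN symp_mx_sqr opprK. Qed.

Lemma row_free_hyperbolic_pairs k m (S : 'M[F]_(k, n + n))
    (X Z : 'M[F]_(m, n + n)) :
  row_free S -> hyperbolic_pairs S X Z -> row_free (col_mx S (col_mx X Z)).
Proof.
move=> freeS [wSX wSZ wXZ wXX wZZ]; apply: inj_row_free => v.
rewrite -[v]hsubmxK -[rsubmx v]hsubmxK !mul_row_col.
set a := lsubmx v; set b := lsubmx (rsubmx v); set c := rsubmx (rsubmx v).
clearbody a b c => comb0.
have wZX : w Z X = - 1%:M by rewrite symp_gramC wXZ trmx1.
have b0 : b = 0.
  have := congr1 (fun Y => w Y Z) comb0.
  by rewrite /= symp_gram0l !symp_gramDl !symp_gramMl wSZ wXZ wZZ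
    !mulmx0 mulmx1 add0r addr0.
have c0 : c = 0.
  have := congr1 (fun Y => w Y X) comb0.
  rewrite /= symp_gram0l !symp_gramDl !symp_gramMl wSX wXX wZX !mulmx0 mulmxN.
  by rewrite mulmx1 !add0r => /eqP; rewrite oppr_eq0 => /eqP.
move: comb0; rewrite b0 c0 !mul0mx !addr0 => aS0.
have -> : a = 0 by apply: (row_free_inj freeS); rewrite /= aS0 mul0mx.
by rewrite !row_mx0.
Qed.

Lemma exists_symp_orth_extension k (S : 'M[F]_(k, n + n)) :
  row_free S -> (k < n)%N ->
  exists x : 'rV[F]_(n + n), w S x = 0 /\ row_free (col_mx S x).
Proof.
move=> freeS ltkn.
pose K := kermx (S *m symp_mx F n)^T.
have rankK : \rank K = (n + n - k)%N.
  by rewrite mxrank_ker mxrank_tr mxrankMfree ?symp_mx_free // (eqP freeS).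
have /row_subPn [i notSi] : ~~ (K <= S)%MS.
  by apply/negP => /mxrankS; rewrite rankK (eqP freeS); lia.
exists (row i K); split.
  have : row i K *m (S *m symp_mx F n)^T = 0 by rewrite -row_mul mulmx_ker row0.
  by move/(congr1 trmx); rewrite trmx_mul trmxK trmx0.
apply: inj_row_free => v; rewrite -[v]hsubmxK mul_row_col.
set a := lsubmx v; set b := rsubmx v; clearbody a b => comb0.
have [b0|bn0] := eqVneq b 0.
  move: comb0; rewrite b0 mul0mx addr0 => aS0.
  have -> : a = 0 by apply: (row_free_inj freeS); rewrite /= aS0 mul0mx.
  by rewrite row_mx0.
have b00 : b 0 0 != 0.
  by apply: contraNneq bn0 => h; apply/eqP/matrixP => p r; rewrite !ord1 h mxE.
case/negP: notSi.
have -> : row i K = (- (b 0 0)^-1 *: a) *m S.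
  rewrite -scalemxAl; move/eqP: comb0; rewrite addr_eq0 => /eqP ->.
  rewrite [b]mx11_scalar mul_scalar_mx mxE eqxx mulr1n scalerN scaleNr opprK.
  by rewrite scalerA mulVf // scale1r.
exact: submxMl.
Qed.

Lemma exists_symp_gram k (A : 'M[F]_(k, n + n)) (c : 'cV[F]_k) :
  row_free A -> exists z : 'rV[F]_(n + n), w A z = c.
Proof.
move=> freeA.
have /row_freeP [P AJP] : row_free (A *m symp_mx F n).
  by rewrite /row_free mxrankMfree ?symp_mx_free.
by exists (P *m c)^T; rewrite /symp_gram trmxK !mulmxA AJP mul1mx.
Qed.

(* Symplectic Gram-Schmidt step: correcting X and Z along x makes them
   orthogonal to z without disturbing the other products. *)
Lemma hyperbolic_pairs_adjoin k m (S : 'M[F]_(k, n + n)) (x z : 'rV[F]_(n + n))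
    (X Z : 'M[F]_(m, n + n)) :
  w S x = 0 -> w S z = 0 -> w x z = 1%:M ->
  hyperbolic_pairs (col_mx S x) X Z ->
  hyperbolic_pairs S (col_mx x (X - w X z *m x)) (col_mx z (Z - w Z z *m x)).
Proof.
move=> wSx wSz wxz [].
rewrite !symp_gram_coll => /eqP; rewrite col_mx_eq0 => /andP[/eqP wSX /eqP wxX].
move=> /eqP; rewrite col_mx_eq0 => /andP[/eqP wSZ /eqP wxZ] wXZ wXX wZZ.
set X' := X - _; set Z' := Z - _.
have wxx : w x x = 0 := symp_gram_alt x.
have wXx : w X x = 0 by rewrite symp_gramC wxX trmx0 oppr0.
have wZx : w Z x = 0 by rewrite symp_gramC wxZ trmx0 oppr0.
have wSX' : w S X' = 0 by rewrite symp_gramBr symp_gramMr wSX wSx mul0mx subr0.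
have wSZ' : w S Z' = 0 by rewrite symp_gramBr symp_gramMr wSZ wSx mul0mx subr0.
have wxX' : w x X' = 0 by rewrite symp_gramBr symp_gramMr wxX wxx mul0mx subr0.
have wxZ' : w x Z' = 0 by rewrite symp_gramBr symp_gramMr wxZ wxx mul0mx subr0.
have wX'x : w X' x = 0 by rewrite symp_gramC wxX' trmx0 oppr0.
have wX'z : w X' z = 0 by rewrite symp_gramBl symp_gramMl wxz mulmx1 subrr.
have wZ'z : w Z' z = 0 by rewrite symp_gramBl symp_gramMl wxz mulmx1 subrr.
have wX'Z' : w X' Z' = 1%:M.
  by rewrite !symp_gramBl !symp_gramBr !symp_gramMl !symp_gramMr wXZ wXx wxZ wxx
    !(mulmx0, mul0mx, subr0).
have wX'X' : w X' X' = 0.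
  by rewrite !symp_gramBl !symp_gramBr !symp_gramMl !symp_gramMr wXX wXx wxX wxx
    !(mulmx0, mul0mx, subr0).
have wZ'Z' : w Z' Z' = 0.
  by rewrite !symp_gramBl !symp_gramBr !symp_gramMl !symp_gramMr wZZ wZx wxZ wxx
    !(mulmx0, mul0mx, subr0).
split; rewrite !(symp_gram_coll, symp_gram_colr) ?symp_gram_alt.
- by rewrite wSx wSX' row_mx0.
- by rewrite wSz wSZ' row_mx0.
- by rewrite wxz wxZ' wX'z wX'Z' (scalar_mx_block 1 m) block_mxEv.
- by rewrite wxX' wX'x wX'X' !row_mx0 col_mx0.
- by rewrite [symp_gram z _]symp_gramC wZ'z trmx0 oppr0 wZ'Z' !row_mx0 col_mx0.
Qed.

Lemma exists_hyperbolic_pairs m : forall k (S : 'M[F]_(k, n + n)),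
  row_free S -> (m <= n - k)%N ->
  exists X Z : 'M[F]_(m, n + n), hyperbolic_pairs S X Z.
Proof.
elim: m => [|m IHm] k S freeS lemnk.
  by exists 0, 0; split; apply/matrixP => i [].
have ltkn : (k < n)%N by lia.
have [x [wSx freeSx]] := exists_symp_orth_extension freeS ltkn.
have [z wSxz] := exists_symp_gram (col_mx 0 1%:M) freeSx.
move: wSxz; rewrite symp_gram_coll => /eq_col_mx [wSz wxz].
have lemnk1 : (m <= n - (k + 1))%N by lia.
have [X [Z pairsX]] := IHm _ _ freeSx lemnk1.
exists (col_mx x (X - symp_gram X z *m x)), (col_mx z (Z - symp_gram Z z *m x)).
exact: hyperbolic_pairs_adjoin.
Qed.

End SymplecticFrames.

Section KernelProjector.
Variables (R : comPzRingType) (k p : nat) (B : 'M[R]_(k, p)) (P : 'M[R]_(p, k)).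

(* A Cramer-rule substitute for the projector I - P (B P)^-1 B, which exists
   over any commutative ring. *)
Definition kernel_projector : 'M[R]_p :=
  (\det (B *m P))%:M - P *m \adj (B *m P) *m B.

Lemma mul_kernel_projector : B *m kernel_projector = 0.
Proof.
rewrite /kernel_projector mulmxBr mul_mx_scalar !mulmxA mul_mx_adj.
by rewrite mul_scalar_mx subrr.
Qed.

Lemma map_kernel_projector (R' : comPzRingType) (f : {rmorphism R -> R'}) :
  map_mx f (B *m P) = 1%:M ->
  map_mx f kernel_projector = 1%:M - map_mx f P *m map_mx f B.
Proof.
move=> BP1; rewrite /kernel_projector map_mxB map_scalar_mx -det_map_mx.
by rewrite !map_mxM map_mx_adj -map_mxM BP1 det1 adj1 mulmx1.
Qed.

End KernelProjector.

Definition liftq (q : nat) (x : 'F_q) : int := (nat_of_ord x)%:Z.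

Lemma liftqK (q m p : nat) (Y : 'M['F_q]_(m, p)) : redq q (map_mx (@liftq q) Y) = Y.
Proof. by apply/matrixP => i j; rewrite !mxE /liftq -pmulrn natr_Zp. Qed.

Lemma redqM (q m p r : nat) (A : 'M[int]_(m, p)) (C : 'M[int]_(p, r)) :
  redq q (A *m C) = redq q A *m redq q C.
Proof. exact: (map_mxM intr). Qed.

Lemma redq_tr (q m p : nat) (A : 'M[int]_(m, p)) : redq q A^T = (redq q A)^T.
Proof. by apply/matrixP => i j; rewrite !mxE. Qed.

Lemma lift_kernel_modq (q k p m : nat) (B : 'M[int]_(k, p)) (Y : 'M['F_q]_(m, p)) :
  row_free (redq q B) -> redq q B *m Y^T = 0 ->
  exists Yz : 'M[int]_(m, p), redq q Yz = Y /\ B *m Yz^T = 0.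
Proof.
move=> /row_freeP [Pq BPq1] BY0.
pose Pi := kernel_projector B (map_mx (@liftq q) Pq).
have BP1 : redq q (B *m map_mx (@liftq q) Pq) = 1%:M by rewrite redqM liftqK.
have Pi_modq : redq q Pi = 1%:M - Pq *m redq q B.
  rewrite [LHS](map_kernel_projector (f := intr) BP1).
  by congr (_ - _ *m _); apply: liftqK.
exists (map_mx (@liftq q) Y *m Pi^T); split.
  rewrite redqM redq_tr Pi_modq liftqK linearB /= trmx1 mulmxBr mulmx1.
  by rewrite trmx_mul mulmxA -[Y *m _]trmxK trmx_mul trmxK BY0 trmx0 mul0mx subr0.
by rewrite trmx_mul trmxK mulmxA mul_kernel_projector mul0mx.
Qed.

Theorem lemma2 (q n k : nat) (Hq : prime q)
    (S : 'M['F_q]_(k, n + n)) (M : 'M[int]_(k, n + n))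
    (HS : stabilizer_code S) (HM : invariant_form S M) :
  exists Xb Zb : 'M[int]_((n - k)%N, n + n),
    (* (i) reductions mod q form a complete set of logical operators *)
    [/\ (forall (s : 'I_k) (i : 'I_(n - k)),
           symp (row s S) (row i (redq q Xb)) = 0 /\
           symp (row s S) (row i (redq q Zb)) = 0),
        \rank (col_mx S (col_mx (redq q Xb) (redq q Zb)))
          = (k + ((n - k) + (n - k)))%N,
        (forall i j : 'I_(n - k),
           [/\ symp (row i (redq q Xb)) (row j (redq q Zb)) = (i == j)%:R,
               symp (row i (redq q Xb)) (row j (redq q Xb)) = 0 &
               symp (row i (redq q Zb)) (row j (redq q Zb)) = 0]) &
      (* (ii) exact integer commutation with every row of M *)
        (forall (s : 'I_k) (i : 'I_(n - k)),
           symp (row s M) (row i Xb) = 0 /\ symp (row s M) (row i Zb) = 0)].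
Proof.
move: HS HM => [rankS _] [redM _].
have freeS : row_free S by rewrite /row_free rankS.
have [X [Z pairsXZ]] := exists_hyperbolic_pairs freeS (leqnn (n - k)).
have freeSXZ := row_free_hyperbolic_pairs freeS pairsXZ.
case: pairsXZ => wSX wSZ wXZ wXX wZZ.
have redMJ : redq q (M *m symp_mx int n) = S *m symp_mx _ n.
  by rewrite redqM redM [redq _ _](map_symp_mx intr).
have freeMJ : row_free (redq q (M *m symp_mx int n)).
  by rewrite redMJ /row_free mxrankMfree ?symp_mx_free // rankS.
have [Xb [redXb wMXb]] : exists Xb, redq q Xb = X /\ symp_gram M Xb = 0.
  by apply: lift_kernel_modq; rewrite // redMJ.
have [Zb [redZb wMZb]] : exists Zb, redq q Zb = Z /\ symp_gram M Zb = 0.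
  by apply: lift_kernel_modq; rewrite // redMJ.
exists Xb, Zb; rewrite redXb redZb; split.
- by move=> s i; rewrite -!symp_gramE wSX wSZ !mxE.
- exact: eqP freeSXZ.
- by move=> i j; rewrite -!symp_gramE wXZ wXX wZZ !mxE.
- by move=> s i; rewrite -!symp_gramE wMXb wMZb !mxE.
Qed.
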